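(* Let $X$ be a countably infinite set and let $M_{2^{\aleph_0}}$ be the lattice consisting of an antichain of cardinality $2^{\aleph_0}$ together with a smallest and a largest element. Then there exists an injective order-preserving map $M_{2^{\aleph_0}}\to\mathrm{Cl}_{loc}(X)$ which preserves (binary) joins, and there exists an injective order-preserving map $M_{2^{\aleph_0}}\to\mathrm{Cl}_{loc}(X)$ which preserves (binary) meets.
   Context: A clone on $X$ is a set of finitary operations $X^n\to X$ ($n\ge1$) containing all projections $\pi^n_k(x_1,\dots,x_n)=x_k$ and closed under composition. Giving $X$ the discrete topology and $X^{X^n}$ the product topology, a clone is local if for each $n$ its set of $n$-ary operations is closed in $X^{X^n}$; equivalently, an $n$-ary operation $g$ belongs to the clone whenever for every finite $B\subseteq X^n$ some $n$-ary operation of the clone agrees with $g$ on $B$. $\mathrm{Cl}_{loc}(X)$ is the complete lattice of local clones on $X$ ordered by inclusion (meet is intersection, join is the smallest local clone containing the union). *)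

From mathcomp Require Import all_boot.
From Stdlib Require List.
Set Implicit Arguments. Unset Strict Implicit. Unset Printing Implicit Defensive.

(** An (n+1)-ary operation on X : X^(n+1) -> X (arities are >= 1). *)
Definition op (X : Type) (n : nat) := ('I_n.+1 -> X) -> X.

Definition opset (X : Type) := forall n : nat, op X n -> Prop.

Definition opset_sub X (C D : opset X) : Prop := forall n f, C n f -> D n f.
Definition opset_eq X (C D : opset X) : Prop := forall n f, C n f <-> D n f.

Definition is_clone X (C : opset X) : Prop :=
  (forall n (k : 'I_n.+1), C n (fun x => x k)) /\
  (forall n m (f : op X n) (gs : 'I_n.+1 -> op X m),
      C n f -> (forall i, C m (gs i)) -> C m (fun x => f (fun i => gs i x))).

Definition is_local X (C : opset X) : Prop :=
  forall n (g : op X n),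
    (forall B : seq ('I_n.+1 -> X),
        exists f, C n f /\ forall t, List.In t B -> f t = g t) ->
    C n g.

Definition local_clone X (C : opset X) : Prop := is_clone C /\ is_local C.

Definition loc_meet X (C D : opset X) : opset X := fun n f => C n f /\ D n f.
Definition loc_join X (C D : opset X) : opset X :=
  fun n f => forall E : opset X, local_clone E ->
    opset_sub C E -> opset_sub D E -> E n f.

(** The lattice M_{2^aleph0}: antichain indexed by nat -> bool (cardinality
    2^aleph0) with bottom and top. *)
Inductive Mc : Type := Mbot | Mtop | Matom of (nat -> bool).

Definition Mle (a b : Mc) : Prop := a = Mbot \/ b = Mtop \/ a = b.

Definition Mlub (a b c : Mc) : Prop :=
  Mle a c /\ Mle b c /\ forall d, Mle a d -> Mle b d -> Mle c d.
Definition Mglb (a b c : Mc) : Prop :=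
  Mle c a /\ Mle c b /\ forall d, Mle d a -> Mle d b -> Mle d c.

Definition countably_infinite (X : Type) : Prop :=
  exists e : nat -> X, bijective e.

From mathcomp Require Import all_boot.
From Stdlib Require List.
From Stdlib Require Import Classical FunctionalExtensionality.

Set Implicit Arguments. Unset Strict Implicit. Unset Printing Implicit Defensive.

(* Every s : nat -> bool is coded by a subset S_s of X (through a bijection with
   nat), and the atom s of M is sent to a local clone built from S_s.
   For joins, the atom s goes to Pol S_s, the bottom to the conservative
   operations and the top to all operations.  If a lies in S_s but not in S_t,
   every operation h is obtained by plugging the constant a (which preserves
   S_s) into the last argument of the operation that returns a fixed point of
   S_t when its last argument lies in S_t and applies h to the other arguments
   otherwise (which preserves S_t); so distinct atoms join to the top.
   For meets, the atom s goes to the clone generated by the idempotent map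
   collapsing S_s onto a point, the bottom to the projections.  An operation in
   two such clones is a projection possibly followed by the collapse map, and
   the two collapse maps differ at some point; so distinct atoms meet in the
   bottom.  The clones are told apart by constant operations resp. by the
   collapse maps themselves. *)

Lemma exists_neq_app (A B : Type) (f h : A -> B) : f <> h -> exists x, f x <> h x.
Proof.
move=> fh; apply: not_all_ex_not => fhx; apply: fh.
exact: functional_extensionality.
Qed.

Section Clones.
Variable X : Type.
Implicit Types (A B : X -> bool) (E : opset X).

(* Otherwise the arity [n] of [pol A n f] etc. would become implicit. *)
Unset Implicit Arguments.
Definition all_ops : opset X := fun _ _ => True.
Definition pol A : opset X := fun n f => forall t, (forall i, A (t i)) -> A (f t).
Definition conservative_ops : opset X := fun n f => forall t, exists i, f t = t i.
Definition unary_ops (J : finType) (v : J -> X -> X) : opset X :=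
  fun n f => exists k i, forall t, f t = v i (t k).
Definition proj_ops : opset X := unary_ops unit (fun _ => id).
Definition idem_ops (u : X -> X) : opset X :=
  unary_ops bool (fun b => if b then u else id).
Set Implicit Arguments.

Lemma local_ext E n (f h : op X n) : is_local E -> E n f -> f =1 h -> E n h.
Proof. by move=> locE Ef fh; apply: locE => B; exists f; split=> // t _. Qed.

Lemma pointwise_local (R : forall n, ('I_n.+1 -> X) -> X -> Prop) :
  is_local (fun n f => forall t, R n t (f t)).
Proof.
move=> n h agree t; have [f [Rf ft]] := agree [:: t].
by rewrite -ft; [exact: Rf | left].
Qed.

Lemma local_clone_all_ops : local_clone all_ops.
Proof. by split; [split|]. Qed.

Lemma local_clone_pol A : local_clone (pol A).
Proof.
split; [split|].
- by move=> n k t; apply.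
- by move=> n m f gs polf polgs t At; apply: polf => i; apply: polgs.
- exact: (@pointwise_local (fun n t y => (forall i, A (t i)) -> A y)).
Qed.

Lemma local_clone_conservative : local_clone conservative_ops.
Proof.
split; [split|].
- by move=> n k t; exists k.
- move=> n m f gs consf consgs t.
  by have [i ->] := consf (fun i => gs i t); apply: consgs.
- exact: (@pointwise_local (fun n t y => exists i, y = t i)).
Qed.

Lemma finite_family_closed (J : finType) n (p : J -> op X n) (g : op X n) :
  (forall B : seq ('I_n.+1 -> X), exists j, forall t, List.In t B -> p j t = g t) ->
  exists j, p j =1 g.
Proof.
move=> agree.
suff /(_ (enum J)) [|j _ pg] : forall s : seq J,
    (forall B : seq (_ -> X),
       exists2 j, j \in s & forall t, List.In t B -> p j t = g t) ->
    exists2 j, j \in s & p j =1 g.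
- by move=> B; have [j pjB] := agree B; exists j; rewrite ?mem_enum.
- by exists j.
elim=> [|j0 s IHs] agree_s; first by have [] := agree_s [::].
have [pg | /not_all_ex_not [t0 pt0]] := classic (p j0 =1 g).
  by exists j0; rewrite ?mem_head.
suff [j js pg] : exists2 j, j \in s & p j =1 g by exists j; rewrite // inE js orbT.
apply: IHs => B; have [j] := agree_s (t0 :: B).
rewrite inE => /orP [/eqP -> /(_ t0 (or_introl erefl)) // | js pjB].
by exists j => // t Bt; apply: pjB; right.
Qed.

Lemma unary_ops_local (J : finType) (v : J -> X -> X) : is_local (unary_ops J v).
Proof.
move=> n g agree.
have [[k i] vg] : exists ki : 'I_n.+1 * J, (fun t => v ki.2 (t ki.1)) =1 g.
  apply: (@finite_family_closed _ _ (fun ki t => v ki.2 (t ki.1))) => B.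
  have [f [[k [i fv]] fg]] := agree B.
  by exists (k, i) => t Bt; rewrite -fg // fv.
by exists k, i => t; rewrite -vg.
Qed.

Lemma unary_ops_clone (J : finType) (v : J -> X -> X) :
  (exists i, v i =1 id) -> (forall i j, exists l, v i \o v j =1 v l) ->
  is_clone (unary_ops J v).
Proof.
move=> [i0 vi0] vcomp; split.
- by move=> n k; exists k, i0 => t; rewrite vi0.
- move=> n m f gs [k [i fv]] gsv.
  have [k' [j gv]] := gsv k; have [l vl] := vcomp i j.
  by exists k', l => t; rewrite fv gv -vl.
Qed.

Lemma local_clone_proj_ops : local_clone proj_ops.
Proof.
split; last exact: unary_ops_local.
by apply: unary_ops_clone; [exists tt | exists tt].
Qed.

Lemma local_clone_idem_ops u : u \o u =1 u -> local_clone (idem_ops u).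
Proof.
move=> uu; split; last exact: unary_ops_local.
apply: unary_ops_clone; first by exists false.
by case; case; [exists true | exists true | exists true | exists false].
Qed.

(* [H y] is [h] of the first arguments when the last one is outside [B], and
   [b] otherwise: [H] preserves [B], and substituting [a] for the last
   argument gives back [h]. *)
Lemma pol_join_full A B a b E : A a -> ~~ B a -> B b -> local_clone E ->
  opset_sub (pol A) E -> opset_sub (pol B) E -> opset_sub all_ops E.
Proof.
move=> Aa Ba Bb [[projE compE] locE] AE BE n h _.
pose H : op X n.+1 :=
  fun y => if B (y ord_max) then b else h (fun j => y (lift ord_max j)).
pose gs : 'I_n.+2 -> op X n :=
  fun i x => if unlift ord_max i is Some j then x j else a.
have EH : E n.+1 H by apply: BE => y By; rewrite /H By.
have Egs i : E n (gs i).
  rewrite /gs; case: unlift => [j|]; first exact: projE.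
  by apply: AE => y _.
apply: (local_ext locE (compE _ _ _ _ EH Egs)) => x.
rewrite /H /gs unlift_none (negbTE Ba); congr h.
by apply: functional_extensionality => j; rewrite liftK.
Qed.

Lemma idem_ops_meet u w x : u x <> w x ->
  opset_sub (loc_meet (idem_ops u) (idem_ops w)) proj_ops.
Proof.
move=> uw n f [[k [[] fu]] [k' [[] fw]]]; try by exists k, tt.
- by move: (fu (fun _ => x)) (fw (fun _ => x)) => /= -> /uw.
- by exists k', tt.
Qed.

Lemma pol_const A a c : A a -> pol A 0 (fun _ => c) <-> A c.
Proof. by move=> Aa; split=> [/(_ (fun _ => a)) -> | Ac t _]. Qed.

Lemma conservative_sub_pol A : opset_sub conservative_ops (pol A).
Proof. by move=> n f consf t At; have [i ->] := consf t. Qed.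

Lemma all_ops_not_sub_pol A a c : A a -> ~~ A c -> ~ opset_sub all_ops (pol A).
Proof. by move=> Aa /negP Ac /(_ 0 (fun _ => c) I) /(pol_const _ Aa). Qed.

Lemma pol_not_sub_conservative A c d :
  A c -> c <> d -> ~ opset_sub (pol A) conservative_ops.
Proof.
move=> Ac cd /(_ 0 (fun _ => c)) cons.
by have [i] := cons (proj2 (pol_const _ Ac) Ac) (fun _ => d).
Qed.

Lemma pol_inj A B a : A a -> B a -> opset_eq (pol A) (pol B) -> A =1 B.
Proof.
move=> Aa Ba AB c; apply/idP/idP => [Ac | Bc].
- by apply/(pol_const _ Ba)/(AB 0 _)/(pol_const _ Aa).
- by apply/(pol_const _ Aa)/(AB 0 _)/(pol_const _ Ba).
Qed.

Lemma proj_sub_idem u : opset_sub proj_ops (idem_ops u).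
Proof. by move=> n f [k [_ fk]]; exists k, false. Qed.

Lemma all_ops_not_sub_unary (J : finType) (v : J -> X -> X) x c :
  (forall i, v i x = x) -> c <> x -> ~ opset_sub all_ops (unary_ops J v).
Proof.
move=> vx cx /(_ 0 (fun _ => c) I) [k [i /(_ (fun _ => x))]].
by rewrite /= vx.
Qed.

Lemma idem_not_sub_proj u x : u x <> x -> ~ opset_sub (idem_ops u) proj_ops.
Proof.
move=> ux /(_ 0 (fun t => u (t ord0))) [|k [_ /(_ (fun _ => x)) //]].
by exists ord0, true.
Qed.

Lemma idem_ops_inj u w x : u x <> x -> opset_sub (idem_ops u) (idem_ops w) -> u =1 w.
Proof.
move=> ux /(_ 0 (fun t => u (t ord0))) [|k [[] uw]]; first by exists ord0, true.
- by move=> y; apply: (uw (fun _ => y)).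
- by case: ux; apply: (uw (fun _ => x)).
Qed.

End Clones.
Arguments pol {X} A n f. Arguments unary_ops {X J} v n f. Arguments idem_ops {X} u n f.

Lemma Mle_refl a : Mle a a.
Proof. by right; right. Qed.

Lemma Mlub_cases a b c : Mlub a b c ->
  Mle c a \/ Mle c b \/ exists s t, [/\ s <> t, a = Matom s & b = Matom t].
Proof.
move=> [ac [bc least]].
case: a ac least => [| |s] ac least.
- by right; left; apply: least; [left | exact: Mle_refl].
- by left; case: ac => [|[|]] // ->; apply: Mle_refl.
case: b bc least => [| |t] bc least.
- by left; apply: least; [exact: Mle_refl | left].
- by right; left; case: bc => [|[|]] // ->; apply: Mle_refl.
case: (classic (s = t)) => [st | st].
  by subst t; left; apply: least; exact: Mle_refl.
by right; right; exists s, t.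
Qed.

Lemma Mglb_cases a b c : Mglb a b c ->
  Mle a c \/ Mle b c \/ exists s t, [/\ s <> t, a = Matom s & b = Matom t].
Proof.
move=> [ca [cb greatest]].
case: a ca greatest => [| |s] ca greatest.
- by left; case: ca => [|[|]] // ->; apply: Mle_refl.
- by right; left; apply: greatest; [right; left | exact: Mle_refl].
case: b cb greatest => [| |t] cb greatest.
- by right; left; case: cb => [|[|]] // ->; apply: Mle_refl.
- by left; apply: greatest; [exact: Mle_refl | right; left].
case: (classic (s = t)) => [st | st].
  by subst t; left; apply: greatest; exact: Mle_refl.
by right; right; exists s, t.
Qed.

Definition join_embedding X (F : Mc -> opset X) : Prop :=
  (forall a, local_clone (F a)) /\
  (forall a b, opset_eq (F a) (F b) -> a = b) /\
  (forall a b, Mle a b -> opset_sub (F a) (F b)) /\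
  (forall a b c, Mlub a b c -> opset_eq (F c) (loc_join (F a) (F b))).

Definition meet_embedding X (G : Mc -> opset X) : Prop :=
  (forall a, local_clone (G a)) /\
  (forall a b, opset_eq (G a) (G b) -> a = b) /\
  (forall a b, Mle a b -> opset_sub (G a) (G b)) /\
  (forall a b c, Mglb a b c -> opset_eq (G c) (loc_meet (G a) (G b))).

Section LatticeEmbedding.
Variables (X : Type) (bot : opset X) (atom : (nat -> bool) -> opset X).
Hypotheses (bot_local : local_clone bot) (atom_local : forall s, local_clone (atom s)).
Hypothesis bot_sub_atom : forall s, opset_sub bot (atom s).
Hypothesis atom_proper : forall s, ~ opset_sub (all_ops X) (atom s).
Hypothesis bot_proper : forall s, ~ opset_sub (atom s) bot.
Hypothesis atom_inj : forall s t, opset_eq (atom s) (atom t) -> s = t.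

Definition Mmap (a : Mc) : opset X :=
  match a with Mbot => bot | Mtop => all_ops X | Matom s => atom s end.

Lemma Mmap_local a : local_clone (Mmap a).
Proof. by case: a => [| |s] /=; [| exact: local_clone_all_ops |]. Qed.

Lemma Mmap_mono a b : Mle a b -> opset_sub (Mmap a) (Mmap b).
Proof. by move=> [->|[->|->]] n f //; case: b => //= s; apply: bot_sub_atom. Qed.

Lemma Mmap_inj a b : opset_eq (Mmap a) (Mmap b) -> a = b.
Proof.
have sub_eq (C D : opset X) : opset_eq C D -> opset_sub C D /\ opset_sub D C.
  by move=> CD; split=> n f /(CD n f).
have bot_top : ~ opset_sub (all_ops X) bot.
  by move=> topbot; apply: (atom_proper (s:=predT)) => n f /topbot /bot_sub_atom.
case: a => [| |s]; case: b => [| |t] //= ab; have [sab sba] := sub_eq _ _ ab;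
  by [ case: bot_top | case: (atom_proper sba) | case: (bot_proper sba)
     | case: (atom_proper sab) | case: (bot_proper sab) | rewrite (atom_inj ab) ].
Qed.

Lemma Mmap_join_embedding :
  (forall s t E, s <> t -> local_clone E ->
     opset_sub (atom s) E -> opset_sub (atom t) E -> opset_sub (all_ops X) E) ->
  join_embedding Mmap.
Proof.
move=> join_full; split; [exact: Mmap_local | split; [exact: Mmap_inj |]].
split=> [|a b c abc]; first exact: Mmap_mono.
have [ac [bc _]] := abc; split.
- move=> Mcf E locE.
  case: (Mlub_cases abc) => [ca | [cb | [s [t [st -> ->]]]]] aE bE.
  + exact/aE/(Mmap_mono ca).
  + exact/bE/(Mmap_mono cb).
  + exact: (join_full s t E).
- by apply; [exact: Mmap_local | exact: Mmap_mono | exact: Mmap_mono].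
Qed.

Lemma Mmap_meet_embedding :
  (forall s t, s <> t -> opset_sub (loc_meet (atom s) (atom t)) bot) ->
  meet_embedding Mmap.
Proof.
move=> meet_bot; split; [exact: Mmap_local | split; [exact: Mmap_inj |]].
split=> [|a b c abc]; first exact: Mmap_mono.
have [ca [cb _]] := abc; split.
- by split; [exact: (Mmap_mono ca) | exact: (Mmap_mono cb)].
- case: (Mglb_cases abc) => [ac | [bc | [s [t [st -> ->]]]]] [Maf Mbf].
  + exact: (Mmap_mono ac).
  + exact: (Mmap_mono bc).
  + by apply: (Mmap_mono (a := Mbot)); [left | apply: (meet_bot _ _ st)].
Qed.

End LatticeEmbedding.

Section CountableCarrier.
Variables (X : Type) (e : nat -> X) (g : X -> nat).
Hypothesis eK : cancel e g.

Definition atom_code (s : nat -> bool) (n : nat) : bool :=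
  match n with 0 => false | 1 => true | m.+2 => s m end.
Definition atom_set s (x : X) : bool := atom_code s (g x).
Definition collapse s (x : X) : X := if atom_set s x then e 0 else x.

Lemma atom_set_e s n : atom_set s (e n) = atom_code s n.
Proof. by rewrite /atom_set eK. Qed.

Lemma atom_code_inj s t : atom_code s =1 atom_code t -> s = t.
Proof. by move=> st; apply: functional_extensionality => m; apply: (st m.+2). Qed.

Lemma pol_atom_set_join_full s t E : s <> t -> local_clone E ->
  opset_sub (pol (atom_set s)) E -> opset_sub (pol (atom_set t)) E ->
  opset_sub (all_ops X) E.
Proof.
move=> st locE; have [m stm] := exists_neq_app st.
have full (s' t' : nat -> bool) : s' m -> ~~ t' m -> opset_sub (pol (atom_set s')) E ->
    opset_sub (pol (atom_set t')) E -> opset_sub (all_ops X) E.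
  by move=> sm tm; apply: (pol_join_full (a := e m.+2) (b := e 1)); rewrite ?atom_set_e.
move: stm; case sm: (s m); case tm: (t m) => // _.
- by apply: full; rewrite ?sm ?tm.
- by move=> sE tE; apply: (full t s); rewrite ?sm ?tm.
Qed.

Lemma exists_join_embedding : exists F : Mc -> opset X, join_embedding F.
Proof.
have in1 s : atom_set s (e 1) by rewrite atom_set_e.
exists (Mmap (conservative_ops X) (fun s => pol (atom_set s))).
apply: Mmap_join_embedding => [|s|s|s|s|s t|]; first exact: local_clone_conservative.
- exact: local_clone_pol.
- exact: conservative_sub_pol.
- by apply: (all_ops_not_sub_pol (c := e 0) (in1 s)); rewrite atom_set_e.
- by apply: (pol_not_sub_conservative (d := e 0) (in1 s)) => /(can_inj eK).
- move=> /(pol_inj (in1 s) (in1 t)) st.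
  by apply: atom_code_inj => n; rewrite -!atom_set_e.
- exact: pol_atom_set_join_full.
Qed.

Lemma collapse_e s n : collapse s (e n) = if atom_code s n then e 0 else e n.
Proof. by rewrite /collapse atom_set_e. Qed.

Lemma collapse_idem s : collapse s \o collapse s =1 collapse s.
Proof.
move=> x; rewrite /= [collapse s x]/collapse.
by case: ifP => [_ | sx]; rewrite /collapse ?sx //; case: ifP.
Qed.

Lemma collapse_inj s t : collapse s =1 collapse t -> s = t.
Proof.
move=> st; apply: functional_extensionality => m; have := st (e m.+2).
by rewrite !collapse_e /=; case: (s m) (t m) => [] [] // /(can_inj eK).
Qed.

Lemma idem_collapse_meet s t : s <> t ->
  opset_sub (loc_meet (idem_ops (collapse s)) (idem_ops (collapse t))) (proj_ops X).
Proof.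
move=> st; have [m stm] := exists_neq_app st.
apply: (idem_ops_meet (x := e m.+2)); rewrite !collapse_e /=.
by case: (s m) (t m) stm => [] [] // _ /(can_inj eK).
Qed.

Lemma exists_meet_embedding : exists G : Mc -> opset X, meet_embedding G.
Proof.
have moves1 s : collapse s (e 1) <> e 1 by rewrite collapse_e => /(can_inj eK).
exists (Mmap (proj_ops X) (fun s => idem_ops (collapse s))).
apply: Mmap_meet_embedding => [|s|s|s|s|s t|]; first exact: local_clone_proj_ops.
- exact/local_clone_idem_ops/collapse_idem.
- exact: proj_sub_idem.
- apply: (all_ops_not_sub_unary (x := e 0) (c := e 1)); last by move/(can_inj eK).
  by case=> //; rewrite /collapse; case: ifP.
- exact: idem_not_sub_proj (moves1 s).
- by move=> st; apply/collapse_inj/(idem_ops_inj (moves1 s)) => n f /(st n f).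
- exact: idem_collapse_meet.
Qed.

End CountableCarrier.

Theorem proposition2p11 (X : Type) (hX : countably_infinite X) :
  (exists F : Mc -> opset X,
      (forall a, local_clone (F a)) /\
      (forall a b, opset_eq (F a) (F b) -> a = b) /\
      (forall a b, Mle a b -> opset_sub (F a) (F b)) /\
      (forall a b c, Mlub a b c -> opset_eq (F c) (loc_join (F a) (F b))))
  /\
  (exists G : Mc -> opset X,
      (forall a, local_clone (G a)) /\
      (forall a b, opset_eq (G a) (G b) -> a = b) /\
      (forall a b, Mle a b -> opset_sub (G a) (G b)) /\
      (forall a b c, Mglb a b c -> opset_eq (G c) (loc_meet (G a) (G b)))).
Proof.
have [e [g eK _]] := hX.
by split; [exact: exists_join_embedding eK | exact: exists_meet_embedding eK].
Qed.
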